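(* Let $a_0=0$ and let $a_1<a_2<\cdots$ be the increasing enumeration of $\{m\ge1:\ c_m=1\}$. Then for every $n\ge0$, $$t_{a_n}=\tfrac12(t_n+t_{n+1})+\tfrac12(-1)^n(t_n-t_{n+1}).$$ In particular $t_{a_{2n}}=t_n$ and $t_{a_{2n+1}}=t_{n+1}$ for all $n\ge0$.
   Context: For $n\in\mathbb{N}$ let $s_2(n)$ be the sum of the binary digits of $n$ and $t_n=s_2(n)\bmod 2\in\{0,1\}$ (the Prouhet–Thue–Morse sequence). Let $F(X)=\sum_{n\ge1}t_nX^n\in\mathbb{F}_2[[X]]$ and let $G(X)=\sum_{n\ge1}c_nX^n\in\mathbb{F}_2[[X]]$ be its compositional inverse, i.e. $F(G(X))=G(F(X))=X$. The $c_n$ are identified with integers in $\{0,1\}$. *)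

From HB Require Import structures.
From mathcomp Require Import all_boot all_order all_algebra.
Set Implicit Arguments. Unset Strict Implicit. Unset Printing Implicit Defensive.
Import Order.TTheory GRing.Theory Num.Theory.
Local Open Scope ring_scope.

(* s_2(n): sum of binary digits; bit i of n is odd (n %/ 2^i), and bits with
   i >= n vanish since 2^i > n. *)
Definition s2 (n : nat) : nat := (\sum_(i < n) odd (n %/ 2 ^ i))%N.

Definition tm (n : nat) : bool := odd (s2 n).

Definition Ftrunc (N : nat) : {poly 'F_2} :=
  \poly_(i < N.+1) (if (0 < i)%N then (tm i)%:R else 0).

Definition trunc (c : nat -> 'F_2) (N : nat) : {poly 'F_2} :=
  \poly_(i < N.+1) c i.

(* G(X) = sum_{n>=1} c_n X^n is the compositional inverse of F:
   F(G(X)) = X and G(F(X)) = X in F_2[[X]].  Since both series have zero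
   constant term, the coefficient of X^n of a composition only depends on the
   truncations at any order N >= n. *)
Definition is_comp_inverse_of_F (c : nat -> 'F_2) : Prop :=
  c 0%N = 0 /\
  (forall N n : nat, (n <= N)%N ->
      (Ftrunc N \Po trunc c N)`_n = (n == 1%N)%:R) /\
  (forall N n : nat, (n <= N)%N ->
      (trunc c N \Po Ftrunc N)`_n = (n == 1%N)%:R).

Definition is_enumeration (c : nat -> 'F_2) (a : nat -> nat) : Prop :=
  a 0%N = 0%N /\
  (forall n, (a n < a n.+1)%N) /\
  (forall m, (1 <= m)%N -> (c m = 1 <-> exists2 n, (1 <= n)%N & a n = m)).

From mathcomp Require Import all_boot all_order all_algebra.
From mathcomp Require Import zify ring lra.
Import GRing.Theory.

(* Splitting F into even and odd parts gives F = (1 + X) F^2 + X / (1 + X)^2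
   over F_2, i.e. (1 + X)^3 F^2 + (1 + X)^2 F + X = 0.  Substituting X := G
   yields (1 + G)^3 X^2 + (1 + G)^2 X + G = 0, which says (1 + X + X G)^3 = 1 + X.
   That cube root is (1 + X)^3 M with M = prod_k (1 + X^(8 4^k)): indeed
   (1 + X^8) M^4 = M, so M^3 = (1 + X)^-8.  The exponents of M are 8 m(k) with
   m the Moser-de Bruijn sequence (binary digits read in base 4), so c_m = 1
   iff m + 1 = 8 m(k) + j for some j < 4, and a_n + 1 is the (n+1)-th such
   exponent.  Finally t(m(k)) = t(k), and t(a_n) follows by cases on n mod 4. *)

Definition binary_in_base (w n : nat) : nat :=
  \sum_(i < n) odd (n %/ 2 ^ i) * w ^ i.

Lemma binary_in_baseE w n :
  binary_in_base w n = odd n + w * binary_in_base w n./2.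
Proof.
have widen K m : m <= K ->
    \sum_(i < K) odd (m %/ 2 ^ i) * w ^ i = binary_in_base w m.
  elim: K => [|K IH]; first by rewrite leqn0 => /eqP ->.
  rewrite leq_eqVlt => /orP[/eqP <- // | ]; rewrite ltnS => leMK.
  rewrite -(IH leMK) big_ord_recr /= divn_small ?addn0 //.
  exact: leq_ltn_trans leMK (ltn_expl K (isT : 1 < 2)).
case: n => [|n]; first by rewrite /binary_in_base !big_ord0 muln0.
rewrite {1}/binary_in_base big_ord_recl /= expn0 divn1 muln1.
have half_le : n.+1./2 <= n by rewrite -divn2; lia.
rewrite -(widen _ _ half_le).
congr (_ + _); rewrite big_distrr; apply: eq_bigr => i _.
by rewrite /bump /= add1n !expnS divnMA divn2 mulnCA.
Qed.

Lemma binary_in_base_double w n :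
  binary_in_base w (2 * n) = w * binary_in_base w n.
Proof. by rewrite binary_in_baseE oddM -divn2 mulKn. Qed.

Lemma binary_in_base_doubleS w n :
  binary_in_base w (2 * n + 1) = w * binary_in_base w n + 1.
Proof.
rewrite binary_in_baseE oddD oddM addnC -divn2.
by congr (_ * binary_in_base _ _ + _); lia.
Qed.

Lemma binary_in_base0 w : binary_in_base w 0 = 0.
Proof. by rewrite /binary_in_base big_ord0. Qed.

Lemma tmE n : tm n = odd n (+) tm n./2.
Proof.
have s2E m : s2 m = binary_in_base 1 m.
  by apply: eq_bigr => i _; rewrite exp1n muln1.
by rewrite /tm !s2E {1}binary_in_baseE mul1n oddD oddb.
Qed.

Lemma tm0 : tm 0 = false. Proof. by rewrite /tm /s2 big_ord0. Qed.

Lemma tm_double n : tm (2 * n) = tm n.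
Proof. by rewrite tmE oddM -divn2 mulKn. Qed.

Lemma tm_doubleS n : tm (2 * n + 1) = ~~ tm n.
Proof. by rewrite tmE oddD oddM (_ : (2 * n + 1)./2 = n) //; lia. Qed.

Lemma tm1 : tm 1 = true. Proof. by rewrite (tm_doubleS 0) tm0. Qed.
Lemma tm3 : tm 3 = false. Proof. by rewrite (tm_doubleS 1) tm1. Qed.
Lemma tm7 : tm 7 = true. Proof. by rewrite (tm_doubleS 3) tm3. Qed.

Lemma tm_pow2_add k x j : j < 2 ^ k -> tm (2 ^ k * x + j) = tm x (+) tm j.
Proof.
elim: k j => [|k IH] j lt_j.
  by move: lt_j; rewrite ltnS leqn0 => /eqP ->; rewrite tm0 mul1n addn0 addbF.
have lt_half : j./2 < 2 ^ k by move: lt_j; rewrite expnS -divn2; lia.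
rewrite -(odd_double_half j) -!mul2n; move: (odd j) (j./2) lt_half => [] h lt_h.
- rewrite (_ : 2 ^ k.+1 * x + (1 + 2 * h) = 2 * (2 ^ k * x + h) + 1).
    by rewrite [1 + _]addnC !tm_doubleS IH //; case: (tm x).
  by rewrite expnS; lia.
- rewrite !add0n (_ : 2 ^ k.+1 * x + 2 * h = 2 * (2 ^ k * x + h)).
    by rewrite !tm_double IH.
  by rewrite expnS; lia.
Qed.

Lemma tm_pow2_mul k x : tm (2 ^ k * x) = tm x.
Proof. by rewrite -[_ * _]addn0 tm_pow2_add ?expn_gt0 // tm0 addbF. Qed.

Lemma incr_geq_id {f : nat -> nat} : (forall n, f n < f n.+1) -> forall n, n <= f n.
Proof. by move=> incr_f; elim=> // n IH; apply: leq_ltn_trans IH (incr_f n). Qed.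

Lemma incr_inj {f : nat -> nat} : (forall n, f n < f n.+1) -> injective f.
Proof. by move=> f_incr; apply: incn_inj; apply: Order.NatMonotonyTheory.incnP. Qed.

Lemma binary_ind (P : nat -> Prop) :
  P 0 -> (forall n (b : bool), P n -> P (2 * n + b)) -> forall n, P n.
Proof.
move=> P0 Pstep; elim/ltn_ind=> n IH; case: (posnP n) => [-> // | n_gt0].
rewrite -(odd_double_half n) addnC -mul2n; apply/Pstep/IH.
by rewrite -divn2; lia.
Qed.

Lemma binary_in_base_ltnS w k : 1 < w -> binary_in_base w k < binary_in_base w k.+1.
Proof.
move=> w_gt1; elim/binary_ind: k => [|k [] IH] /=.
- by rewrite (binary_in_base_doubleS w 0) binary_in_base0 muln0.
- rewrite (_ : (2 * k + 1).+1 = 2 * k.+1) ?binary_in_base_double; last lia.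
  by rewrite binary_in_base_doubleS; have := leq_mul (leqnn w) IH; lia.
- by rewrite addn0 -[(2 * k).+1]addn1 binary_in_base_doubleS binary_in_base_double addn1.
Qed.

Notation moser := (binary_in_base 4).

Lemma moser_ltnS k : moser k < moser k.+1.
Proof. exact: binary_in_base_ltnS. Qed.

Lemma moser_gt0 k : 0 < k -> 0 < moser k.
Proof. by move/(homo_ltn ltn_trans moser_ltnS); rewrite binary_in_base0. Qed.

Lemma tm_moser k : tm (moser k) = tm k.
Proof.
elim/binary_ind: k => [|k b IH]; first by rewrite binary_in_base0.
case: b; rewrite ?addn0 ?binary_in_base_double ?binary_in_base_doubleS.
- by rewrite (tm_pow2_add 2) // IH tm1 tm_doubleS addbT.
- by rewrite (tm_pow2_mul 2) IH tm_double.
Qed.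

Lemma tm_moser_pred j : 0 < j -> tm (8 * moser j - 1) = tm j.
Proof.
elim/binary_ind: j => // j [] IH /= j_gt0; rewrite ?addn0 in j_gt0 *.
- rewrite binary_in_base_doubleS (_ : 8 * _ - 1 = 2 ^ 5 * moser j + 7); last lia.
  by rewrite tm_pow2_add // tm_moser tm7 tm_doubleS addbT.
- have mj_gt0 : 0 < moser j by apply: moser_gt0; lia.
  rewrite binary_in_base_double.
  rewrite (_ : 8 * (4 * moser j) - 1 = 2 ^ 2 * (8 * moser j - 1) + 3); last lia.
  by rewrite tm_pow2_add // IH ?tm3 ?addbF ?tm_double //; lia.
Qed.

(* The exponents of (1 + X)^3 M, in increasing order. *)
Definition cbrt_support (i : nat) : nat := 8 * moser (i %/ 4) + i %% 4.

Lemma cbrt_supportE k j : j < 4 -> cbrt_support (4 * k + j) = 8 * moser k + j.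
Proof. by move=> j_lt4; rewrite /cbrt_support (_ : (4 * k + j) %/ 4 = k); lia. Qed.

Lemma cbrt_support_ltnS i : cbrt_support i < cbrt_support i.+1.
Proof.
rewrite /cbrt_support; have [i_mod|i_mod] : i %% 4 < 3 \/ i %% 4 = 3 by lia.
  by rewrite (_ : i.+1 %/ 4 = i %/ 4); lia.
by have := moser_ltnS (i %/ 4); rewrite (_ : i.+1 %/ 4 = (i %/ 4).+1); lia.
Qed.

Lemma cbrt_support0 : cbrt_support 0 = 0.
Proof. by rewrite /cbrt_support binary_in_base0. Qed.

Lemma cbrt_support1 : cbrt_support 1 = 1.
Proof. by rewrite /cbrt_support binary_in_base0. Qed.

Definition inv_support (n : nat) : nat := cbrt_support n.+1 - 1.

Lemma inv_support_ltnS n : inv_support n < inv_support n.+1.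
Proof.
have := homo_ltn ltn_trans cbrt_support_ltnS (ltn0Sn n); rewrite cbrt_support0.
by rewrite /inv_support; have := cbrt_support_ltnS n.+1; lia.
Qed.

Lemma tm_inv_support n : tm (inv_support n) = tm (if odd n then n.+1 else n).
Proof.
have [k [j j_lt4 ->]] : exists k, exists2 j, j < 4 & n = 4 * k + j.
  by exists (n %/ 4), (n %% 4); lia.
have tm2 : tm 2 = true by rewrite (tm_pow2_mul 1 1) tm1.
rewrite /inv_support oddD oddM /= -addnS.
case: j j_lt4 => [|[|[|[|//]]]] _.
- by rewrite cbrt_supportE // addnK addn0 (tm_pow2_mul 3) (tm_pow2_mul 2) tm_moser.
- rewrite cbrt_supportE // (_ : 8 * moser k + 2 - 1 = 8 * moser k + 1); last lia.
  by rewrite (tm_pow2_add 3) // (tm_pow2_add 2) // tm_moser tm1 tm2.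
- rewrite cbrt_supportE // (_ : 8 * moser k + 3 - 1 = 8 * moser k + 2); last lia.
  by rewrite (tm_pow2_add 3) // (tm_pow2_add 2) // tm_moser.
- rewrite (_ : 4 * k + 4 = 4 * k.+1 + 0) ?cbrt_supportE // !addn0; last lia.
  by rewrite tm_moser_pred // (tm_pow2_mul 2).
Qed.

Local Open Scope ring_scope.

Lemma sum_nat_mul_blocks (V : nmodType) n k (F : nat -> V) :
  \sum_(0 <= i < n * k) F i = \sum_(0 <= i < n) \sum_(0 <= j < k) F (i * k + j)%N.
Proof.
rewrite big_nat_mul; apply: eq_bigr => i _.
rewrite -{1}[(i * k)%N]add0n big_addn mulSn addnK.
by apply: eq_bigr => j _; rewrite addnC.
Qed.

Section PolyXnDivisibility.
Context {F : fieldType}.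
Implicit Types p q r d u : {poly F}.

Lemma dvdp_XnP n p : reflect (forall i, (i < n)%N -> p`_i = 0) ('X^n %| p).
Proof.
apply: (iffP idP) => [/dvdpP[q ->] i lt_in | p_low]; first by rewrite coefMXn lt_in.
rewrite -(poly_take_drop n p) (_ : take_poly n p = 0) ?add0r ?dvdp_mull //.
by apply/polyP => i; rewrite coef_take_poly coef0; case: ifP => // /p_low.
Qed.

Lemma dvdp_Xn_mulr n d u : u.[0] != 0 -> ('X^n %| d * u) = ('X^n %| d).
Proof.
move=> u0; rewrite Gauss_dvdpl // coprimep_expl // coprimep_sym coprimepX.
by rewrite /root u0.
Qed.

Lemma dvdp_Xn_comp [n p q] : 'X^n %| p -> q.[0] = 0 -> 'X^n %| p \Po q.
Proof.
move=> /dvdpP[r ->] q0; rewrite comp_polyM comp_Xn_poly dvdp_mull // dvdp_exp2r //.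
by rewrite -['X]subr0 -polyC0 dvdp_XsubCl /root q0.
Qed.

End PolyXnDivisibility.

Lemma comp_polyB_factor {R : comNzRingType} (p q r : {poly R}) :
  q.[0] = 0 -> r.[0] = 0 ->
  exists2 s, (p \Po q) - (p \Po r) = (q - r) * s & s.[0] = p`_1.
Proof.
move=> q0 r0; elim/poly_ind: p => [|p c [s IHs s0]].
  by exists 0; rewrite ?comp_poly0 ?subrr ?mulr0 ?horner0 ?coef0.
exists (s * q + (p \Po r)).
  by rewrite !comp_poly_MXaddC -[p \Po q](subrK (p \Po r)) IHs; ring.
by rewrite hornerD hornerM q0 mulr0 add0r horner_comp r0 horner_coef0 coefD coefMX coefC addr0.
Qed.

Lemma pchar2_polyF2 : (2 \in [pchar {poly 'F_2}])%N.
Proof. by rewrite pchar_poly; apply: pchar_Fp. Qed.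

Lemma natr2_polyF2 : (2%:R : {poly 'F_2}) = 0.
Proof. exact: pcharf0 pchar2_polyF2. Qed.

Lemma sqrrD_polyF2 (p q : {poly 'F_2}) : (p + q) ^+ 2 = p ^+ 2 + q ^+ 2.
Proof. by rewrite -!(pFrobenius_autE pchar2_polyF2) rmorphD. Qed.

Lemma sqr_sum_polyF2 (I : Type) (r : seq I) (F : I -> {poly 'F_2}) :
  (\sum_(i <- r) F i) ^+ 2 = \sum_(i <- r) F i ^+ 2.
Proof.
elim: r => [|i r IH]; first by rewrite !big_nil expr0n.
by rewrite !big_cons sqrrD_polyF2 IH.
Qed.

Lemma natr_negb_F2 (b : bool) : ((~~ b)%:R : 'F_2) = 1 + b%:R.
Proof. by case: b; rewrite ?addr0 // -mulr2n (pchar_Fp_0 (isT : prime 2)). Qed.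

(* tm_rel X F = 0 for the Thue-Morse series F, and tm_rel G X = 0 for its inverse G. *)
Definition tm_rel (x y : {poly 'F_2}) : {poly 'F_2} :=
  (1 + x) ^+ 3 * y ^+ 2 + (1 + x) ^+ 2 * y + x.

Lemma tm_relB x y z :
  tm_rel x y - tm_rel x z = (y - z) * ((1 + x) ^+ 3 * (y + z) + (1 + x) ^+ 2).
Proof. by rewrite /tm_rel; ring. Qed.

Lemma tm_rel_comp x y q : tm_rel x y \Po q = tm_rel (x \Po q) (y \Po q).
Proof.
by rewrite /tm_rel !(comp_polyD, comp_polyM, rmorphXn) /= -polyC1 comp_polyC.
Qed.

Definition tm_poly (K : nat) : {poly 'F_2} := \sum_(0 <= i < 2 ^ K) (tm i)%:R *: 'X^i.

Lemma coef_tm_poly K j : (tm_poly K)`_j = if (j < 2 ^ K)%N then (tm j)%:R else 0.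
Proof.
by rewrite /tm_poly big_mkord -(poly_def _ (fun i => (tm i)%:R)) coef_poly.
Qed.

Lemma tm_poly_rec K :
  tm_poly K.+1 = (1 + 'X) * tm_poly K ^+ 2 + 'X * \sum_(0 <= i < 2 ^ K) 'X^(i * 2).
Proof.
rewrite {1}/tm_poly expnSr sum_nat_mul_blocks sqr_sum_polyF2 !big_distrr -big_split.
apply: eq_bigr => i _ /=; rewrite !big_nat_recl // big_geq // addr0 addn0 addn1.
rewrite exprZn -exprM -[(i * 2).+1]addn1 !(mulnC i 2%N) tm_double tm_doubleS natr_negb_F2.
have -> : ((tm i)%:R : 'F_2) ^+ 2 = (tm i)%:R by case: (tm i); rewrite ?expr1n ?expr0n.
by rewrite exprD expr1 -!mul_polyC rmorphD /= polyC1; ring.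
Qed.

Lemma tm_rel_tm_poly K : 'X^(2 ^ K) %| tm_rel 'X (tm_poly K).
Proof.
have geom : (1 + 'X) ^+ 2 * \sum_(0 <= i < 2 ^ K) 'X^(i * 2) = 1 + 'X^(2 ^ K.+1)
    :> {poly 'F_2}.
  rewrite sqrrD_polyF2 expr1n big_mkord.
  under eq_bigr do rewrite mulnC exprM.
  have := subrX1 ('X^2 : {poly 'F_2}) (2 ^ K).
  rewrite !(GRing.subr_pchar2 pchar2_polyF2) => geometric_sum.
  by rewrite addrC -geometric_sum expnS exprM addrC.
have -> : tm_rel 'X (tm_poly K) =
    (1 + 'X) ^+ 2 * (tm_poly K.+1 - tm_poly K)
    - 'X * ((1 + 'X) ^+ 2 * \sum_(0 <= i < 2 ^ K) 'X^(i * 2) - 1)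
    + 2%:R * ((1 + 'X) ^+ 2 * tm_poly K).
  by rewrite /tm_rel tm_poly_rec; ring.
rewrite geom [1 + 'X^_]addrC addrK natr2_polyF2 mul0r addr0.
rewrite dvdp_sub ?dvdp_mull //; last first.
  by rewrite dvdp_exp2l // ltnW // ltn_exp2l.
apply/dvdp_XnP => i lt_i; rewrite coefB !coef_tm_poly lt_i.
by rewrite (leq_trans lt_i) ?subrr // leq_exp2l.
Qed.

Lemma tm_rel_Ftrunc N : 'X^(N.+1) %| tm_rel 'X (Ftrunc N).
Proof.
have lt_N : (N.+1 < 2 ^ N.+1)%N by apply: ltn_expl.
rewrite -(subrK (tm_rel 'X (tm_poly N.+1)) (tm_rel 'X _)) tm_relB.
rewrite dvdp_add ?dvdp_mulr //; last first.
  by apply: dvdp_trans (tm_rel_tm_poly _); rewrite dvdp_exp2l // ltnW.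
apply/dvdp_XnP => i lt_i; rewrite coefB coef_tm_poly /Ftrunc coef_poly lt_i.
by rewrite (ltn_trans lt_i lt_N); case: i {lt_i} => [|i]; rewrite ?tm0 subrr.
Qed.

Definition moser_poly (K : nat) : {poly 'F_2} := \sum_(0 <= k < 2 ^ K) 'X^(8 * moser k).

Lemma moser_poly_rec K : (1 + 'X^8) * moser_poly K ^+ 4 = moser_poly K.+1.
Proof.
rewrite [in LHS](exprM _ 2 2) /moser_poly !sqr_sum_polyF2 expnSr sum_nat_mul_blocks.
rewrite big_distrr; apply: eq_bigr => k _ /=.
rewrite !big_nat_recl // big_geq // addr0 addn0 addn1 -!exprM.
rewrite -[(k * 2).+1]addn1 !(mulnC k 2%N) binary_in_base_double binary_in_base_doubleS.
rewrite mulrDl mul1r -exprD (_ : 8 * moser k * (2 * 2) = 8 * (4 * moser k))%N //; last lia.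
by rewrite mulnDr muln1 addnC.
Qed.

Lemma moser_poly_diff K : 'X^(8 * 2 ^ K) %| moser_poly K.+1 - moser_poly K.
Proof.
rewrite /moser_poly (big_cat_nat _ (n := 2 ^ K)) //=; last by rewrite leq_exp2l.
rewrite addrAC subrr add0r big_nat_cond.
apply: (big_ind (fun p => 'X^(8 * 2 ^ K) %| p)) => [|p q|k /andP[/andP[le_k _] _]].
- exact: dvdp0.
- exact: dvdp_add.
- by rewrite dvdp_exp2l // leq_mul2l (leq_trans le_k) // (incr_geq_id moser_ltnS).
Qed.

Lemma moser_poly0 K : (moser_poly K).[0] = 1.
Proof.
rewrite /moser_poly horner_sum big_ltn ?expn_gt0 // binary_in_base0 muln0 hornerXn.
rewrite big1_seq ?addr0 // => k /andP[_]; rewrite mem_index_iota => /andP[k_gt0 _].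
by rewrite hornerXn expr0n eqn0Ngt muln_gt0 moser_gt0.
Qed.

Lemma moser_poly_cube K : 'X^(8 * 2 ^ K) %| (1 + 'X^8) * moser_poly K ^+ 3 - 1.
Proof.
rewrite -(dvdp_Xn_mulr _ _ (moser_poly K)) ?moser_poly0 ?oner_neq0 //.
by rewrite mulrBl mul1r -mulrA -exprSr moser_poly_rec moser_poly_diff.
Qed.

Definition cbrt_poly (K : nat) : {poly 'F_2} := (1 + 'X) ^+ 3 * moser_poly K.

Lemma cbrt_poly_cube K : 'X^(8 * 2 ^ K) %| cbrt_poly K ^+ 3 - (1 + 'X).
Proof.
have -> : cbrt_poly K ^+ 3 - (1 + 'X) = (1 + 'X) * ((1 + 'X) ^+ 8 * moser_poly K ^+ 3 - 1).
  by rewrite /cbrt_poly; ring.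
have -> : (1 + 'X) ^+ 8 = 1 + 'X^8 :> {poly 'F_2}.
  by rewrite -[8%N]/(2 * (2 * 2))%N !exprM !sqrrD_polyF2 !expr1n -!exprM.
by rewrite dvdp_mull // moser_poly_cube.
Qed.

Lemma cbrt_polyE K : cbrt_poly K = \sum_(0 <= i < 2 ^ K * 4) 'X^(cbrt_support i).
Proof.
rewrite /cbrt_poly.
have -> : (1 + 'X) ^+ 3 = 1 + 'X + 'X ^+ 2 + 'X ^+ 3 :> {poly 'F_2}.
  have -> : (1 + 'X) ^+ 3 = 1 + 'X + 'X ^+ 2 + 'X ^+ 3 + 2%:R * ('X + 'X ^+ 2) :> {poly 'F_2}.
    by ring.
  by rewrite natr2_polyF2 mul0r addr0.
rewrite sum_nat_mul_blocks /moser_poly big_distrr; apply: eq_bigr => k _ /=.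
rewrite !big_nat_recl // big_geq // addr0 !(mulnC k 4%N) !cbrt_supportE // addn0.
by rewrite !exprD; ring.
Qed.

(* Indices up to m suffice since cbrt_support i >= i. *)
Definition in_cbrt_support (m : nat) : bool := m \in map cbrt_support (iota 0 m.+1).

Lemma in_cbrt_supportP m : reflect (exists i, cbrt_support i = m) (in_cbrt_support m).
Proof.
apply: (iffP mapP) => [[i _ ->] | [i <-]]; first by exists i.
by exists i; rewrite // mem_iota ltnS (incr_geq_id cbrt_support_ltnS).
Qed.

Lemma coef_cbrt_poly K m : (m < 2 ^ K * 4)%N -> (cbrt_poly K)`_m = (in_cbrt_support m)%:R.
Proof.
move=> lt_m; rewrite cbrt_polyE coef_sum.
under eq_bigr do rewrite coefXn.
have -> : in_cbrt_support m = (m \in map cbrt_support (iota 0 (2 ^ K * 4))).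
  apply/in_cbrt_supportP/mapP => [[i e_i] | [i _ ->]]; last by exists i.
  exists i; rewrite // mem_iota add0n (leq_ltn_trans _ lt_m) // -e_i.
  exact: (incr_geq_id cbrt_support_ltnS i).
have uniq_support : uniq (map cbrt_support (iota 0 (2 ^ K * 4))).
  by rewrite (map_inj_uniq (incr_inj cbrt_support_ltnS)) iota_uniq.
rewrite -(count_uniq_mem m uniq_support) count_map -sum1_count natr_sum [RHS]big_mkcond.
by rewrite /index_iota subn0; apply: eq_bigr => i _; rewrite /= eq_sym; case: eqP.
Qed.

(* The coefficients of G = ((1 + X)^(1/3) - 1 - X) / X. *)
Definition inv_coef (m : nat) : 'F_2 := ((m != 0)%N && in_cbrt_support m.+1)%:R.

Lemma cbrt_poly_trunc N K : (N.+2 <= 2 ^ K * 4)%N ->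
  'X^(N.+2) %| cbrt_poly K - (1 + 'X + 'X * trunc inv_coef N).
Proof.
have in_support i : in_cbrt_support (cbrt_support i) by apply/in_cbrt_supportP; exists i.
move=> le_NK; apply/dvdp_XnP => i lt_i.
rewrite coefB coef_cbrt_poly ?(leq_trans lt_i) // !coefD coef1 coefX coefXM.
rewrite /trunc coef_poly /inv_coef; apply/eqP; rewrite subr_eq0; apply/eqP.
case: i lt_i => [|[|i]] lt_i /=.
- by have := in_support 0; rewrite cbrt_support0 => ->; rewrite !addr0.
- by have := in_support 1; rewrite cbrt_support1 => ->; rewrite add0r addr0.
- by move: lt_i; rewrite !add0r ltnS => ->.
Qed.

Lemma tm_rel_inv_coef N : 'X^(N.+1) %| tm_rel (trunc inv_coef N) 'X.
Proof.
set Q := trunc inv_coef N; set B := 1 + 'X + 'X * Q; set R := cbrt_poly N.+2.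
suff : 'X^(N.+2) %| B ^+ 3 - (1 + 'X).
  have -> : B ^+ 3 - (1 + 'X) =
      'X * tm_rel Q 'X + 2%:R * ('X * (1 + Q) + ('X * (1 + Q)) ^+ 2).
    by rewrite /B /tm_rel; ring.
  by rewrite natr2_polyF2 mul0r addr0 exprS dvdp_mul2l ?polyX_eq0.
have le_N : (N.+2 <= 2 ^ N.+2 * 4)%N.
  by rewrite (leq_trans (ltnW (ltn_expl _ (isT : (1 < 2)%N)))) // leq_pmulr.
have -> : B ^+ 3 - (1 + 'X) = (R ^+ 3 - (1 + 'X)) - (R - B) * (R ^+ 2 + R * B + B ^+ 2).
  by ring.
rewrite dvdp_sub ?dvdp_mulr ?cbrt_poly_trunc //.
by apply: dvdp_trans (cbrt_poly_cube _); rewrite dvdp_exp2l //; lia.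
Qed.

Lemma comp_inverse_unique {F : fieldType} [n : nat] [p q1 q2 : {poly F}] :
  q1.[0] = 0 -> q2.[0] = 0 -> p`_1 != 0 ->
  'X^n %| (p \Po q1) - 'X -> 'X^n %| (p \Po q2) - 'X -> 'X^n %| q1 - q2.
Proof.
move=> q10 q20 p1 inv1 inv2; have [s p_diff s0] := comp_polyB_factor p q1 q2 q10 q20.
rewrite -(dvdp_Xn_mulr _ _ s) ?s0 // -p_diff.
have -> : (p \Po q1) - (p \Po q2) = ((p \Po q1) - 'X) - ((p \Po q2) - 'X) by ring.
exact: dvdp_sub.
Qed.

Lemma tm_rel_comp_inverse n p q : p.[0] = 0 -> q.[0] = 0 ->
  'X^n %| tm_rel 'X p -> 'X^n %| tm_rel q 'X -> 'X^n %| (p \Po q) - 'X.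
Proof.
move=> p0 q0 rel_p rel_q.
have := dvdp_Xn_comp rel_p q0; rewrite tm_rel_comp comp_polyX => rel_pq.
rewrite -(dvdp_Xn_mulr _ _ ((1 + q) ^+ 3 * ((p \Po q) + 'X) + (1 + q) ^+ 2)).
  by rewrite -tm_relB dvdp_sub.
by rewrite !hornerE horner_comp q0 p0 addr0 mulr0 add0r expr1n oner_neq0.
Qed.

(* Only F (G X) = X is needed: a right inverse is unique modulo every X^n. *)
Lemma inverse_coefE [c] : is_comp_inverse_of_F c -> c =1 inv_coef.
Proof.
move=> [c0 [Fc _]] m; case: m => [|N]; first by rewrite c0.
set n := N.+1.
have trunc0 d : d 0%N = 0 -> (trunc d n).[0] = 0 by rewrite horner_coef0 coef_poly.
have c_inverse : 'X^(n.+1) %| (Ftrunc n \Po trunc c n) - 'X.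
  by apply/dvdp_XnP => i lt_i; rewrite coefB Fc // coefX subrr.
have F0 : (Ftrunc n).[0] = 0 by rewrite horner_coef0 coef_poly.
have F1 : (Ftrunc n)`_1 != 0 by rewrite coef_poly /= tm1 oner_neq0.
have inv_coef_inverse : 'X^(n.+1) %| (Ftrunc n \Po trunc inv_coef n) - 'X.
  by apply: tm_rel_comp_inverse; rewrite ?F0 ?trunc0 ?tm_rel_Ftrunc ?tm_rel_inv_coef.
have := comp_inverse_unique (trunc0 _ c0) (trunc0 _ (erefl _)) F1 c_inverse inv_coef_inverse.
move=> /dvdp_XnP/(_ n (ltnSn n)).
by rewrite coefB !coef_poly ltnSn => /eqP; rewrite subr_eq0 => /eqP.
Qed.

Lemma incr_eq_of_range (f g : nat -> nat) :
  (forall n, f n < f n.+1)%N -> (forall n, g n < g n.+1)%N ->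
  (forall m, (exists n, f n = m) <-> (exists n, g n = m)) -> f =1 g.
Proof.
have le_incr h (h_incr : forall n, (h n < h n.+1)%N) : {homo h : i j / (i <= j)%N}.
  exact: homo_leq leqnn leq_trans (fun i => ltnW (h_incr i)).
suff le_gf f' g' : (forall n, f' n < f' n.+1)%N -> (forall n, g' n < g' n.+1)%N ->
    (forall m, (exists n, f' n = m) -> (exists n, g' n = m)) ->
    forall n, (forall k, (k < n)%N -> f' k = g' k) -> (g' n <= f' n)%N.
  move=> f_incr g_incr same; elim/ltn_ind => n IH; apply/eqP; rewrite eqn_leq.
  rewrite (le_gf g f) ?(le_gf f g) // => [m /same // | m /same // | k /IH //].
move=> f_incr g_incr f_in_g n IH; have [k gk] := f_in_g (f' n) (ex_intro _ n erefl).
case: (ltnP k n) => [lt_kn | le_nk]; last by rewrite -gk le_incr.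
by move: gk; rewrite -IH // => /(incr_inj f_incr) eq_kn; rewrite eq_kn ltnn in lt_kn.
Qed.

Lemma inv_coef_eq1 m : (0 < m)%N -> inv_coef m = 1 <-> exists n, inv_support n = m.
Proof.
move=> m_gt0; rewrite /inv_coef -lt0n m_gt0 /=; split.
- case: in_cbrt_supportP => // -[[|i]]; first by rewrite cbrt_support0.
  by move=> supp_i _; exists i; rewrite /inv_support supp_i subn1.
- move=> [n <-]; have := homo_ltn ltn_trans cbrt_support_ltnS (ltn0Sn n).
  rewrite cbrt_support0 /inv_support => supp_gt0; rewrite subn1 prednK //.
  by case: in_cbrt_supportP => // -[]; exists n.+1.
Qed.

Theorem mainTheorem9 (c : nat -> 'F_2) :
  is_comp_inverse_of_F c ->
  (* the set {m >= 1 : c_m = 1} is infinite, so the enumeration exists *)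
  (forall N : nat, exists2 m : nat, (N < m)%N & c m = 1) /\
  (forall a : nat -> nat, is_enumeration c a ->
     (forall n : nat,
        ((tm (a n))%:R : rat) =
          1 / 2 * ((tm n)%:R + (tm n.+1)%:R)
          + 1 / 2 * (-1) ^+ n * ((tm n)%:R - (tm n.+1)%:R)) /\
     (forall n : nat, tm (a (2 * n)%N) = tm n /\ tm (a (2 * n).+1) = tm n.+1)).
Proof.
move=> c_inv; have c_eq := inverse_coefE c_inv.
have support_ge n : (n <= inv_support n)%N := incr_geq_id inv_support_ltnS n.
split=> [N | a [a0 [a_incr a_range]]].
  exists (inv_support N.+1); first exact: support_ge.
  by rewrite c_eq inv_coef_eq1 ?(leq_trans _ (support_ge _)) //; exists N.+1.
have a_eq : a =1 inv_support.
  apply: incr_eq_of_range a_incr inv_support_ltnS _ => -[|m].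
    by split=> _; exists 0%N; rewrite ?a0 // /inv_support cbrt_support1.
  rewrite -inv_coef_eq1 // -c_eq a_range //; split=> [[n] | [n n_gt0]]; last by exists n.
  by case: n => [|n] a_n; [rewrite a0 in a_n | exists n.+1].
have tm_a n : tm (a n) = tm (if odd n then n.+1 else n) by rewrite a_eq tm_inv_support.
split=> n; rewrite !tm_a.
  by rewrite -signr_odd; case: (odd n); rewrite ?expr1 ?expr0 /=; lra.
by rewrite /= !oddM /= (_ : (2 * n).+2 = 2 * n.+1)%N ?tm_double // mulnS.
Qed.
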